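(* For the system $\dot x=f_\sigma(x)$ described in the context, for every $\sigma\in\{0,1\}^{|\tilde{\mathcal L}|}$ there exists $x^*$ with $f_\sigma(x^* )=0$. Moreover, every equilibrium $z^*=(x^*,\sigma)$ (i.e. $f_\sigma(x^* )=0$), with $x^*=(\eta^*,\omega^*,p^{M,*},p^{c,*},\psi^* )$, satisfies $\omega^*=\mathbf 0_{|\mathcal N|}$ and $p^{c,*}\in\operatorname{Im}(\mathbf 1_{|\mathcal N|})$.
   Context: Power network $(\mathcal N,\mathcal E)$: connected directed graph, $\mathcal N=\{1,\dots,|\mathcal N|\}$, arbitrarily oriented ($(i,j)\in\mathcal E\Rightarrow(j,i)\notin\mathcal E$), $\mathcal N^p_j=\{k:(k,j)\in\mathcal E\}$, $\mathcal N^s_j=\{k:(j,k)\in\mathcal E\}$; communication network $(\mathcal N,\tilde{\mathcal E})$ connected directed. For $j\in\mathcal N$, $\mathcal L_j$ is a finite set of on-off loads, $\tilde{\mathcal L}=\{(l,j):l\in\mathcal L_j,j\in\mathcal N\}$, load magnitudes $\overline d_{l,j}>0$. Constants $M_j,\gamma_j,\kappa_j,A_j,\tau_j>0$, $p^L_j\in\mathbb R$, $B_{ij}>0$ ($(i,j)\in\mathcal E$), $\tau_{ij}>0$ ($(i,j)\in\tilde{\mathcal E}$). For $x=(\eta,\omega,p^M,p^c,\psi)\in\mathbb R^n$, $n=3|\mathcal N|+|\mathcal E|+|\tilde{\mathcal E}|$, and $\sigma\in\{0,1\}^{|\tilde{\mathcal L}|}$, $f_\sigma(x)$ is the vector field given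 by $\dot\eta_{ij}=\omega_i-\omega_j$ ($(i,j)\in\mathcal E$); $M_j\dot\omega_j=p^M_j-p^L_j-A_j\omega_j-\sum_{l\in\mathcal L_j}\overline d_{l,j}\sigma_{l,j}-\sum_{k\in\mathcal N^s_j}B_{jk}\eta_{jk}+\sum_{i\in\mathcal N^p_j}B_{ij}\eta_{ij}$; $\gamma_j\dot p^M_j=-(p^M_j+\kappa_j\omega_j-\kappa_jp^c_j)$; $\tau_{ij}\dot\psi_{ij}=p^c_i-p^c_j$ ($(i,j)\in\tilde{\mathcal E}$); $\tau_j\dot p^c_j=-p^M_j+p^L_j+\sum_{l\in\mathcal L_j}\overline d_{l,j}\sigma_{l,j}-\sum_{k:(j,k)\in\tilde{\mathcal E}}\psi_{jk}+\sum_{i:(i,j)\in\tilde{\mathcal E}}\psi_{ij}$. *)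

From HB Require Import structures.
From mathcomp Require Import all_boot all_order all_algebra.
Set Implicit Arguments. Unset Strict Implicit. Unset Printing Implicit Defensive.
Import Order.TTheory GRing.Theory Num.Theory.
Local Open Scope ring_scope.

Definition edge {N : nat} (E : {set 'I_N * 'I_N}) := {e : 'I_N * 'I_N | e \in E}.

Definition weakly_connected {N : nat} (E : {set 'I_N * 'I_N}) : Prop :=
  forall i j : 'I_N, connect (fun a b => ((a, b) \in E) || ((b, a) \in E)) i j.

Definition oriented {N : nat} (E : {set 'I_N * 'I_N}) : Prop :=
  forall i j : 'I_N, (i, j) \in E -> (j, i) \notin E.

(* State x = (eta, omega, p^M, p^c, psi) in R^n,
   n = 3|N| + |E| + |E~| (eta indexed by power edges, psi by comm. edges). *)
Record state (R : realFieldType) (N : nat)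
    (E Ec : {set 'I_N * 'I_N}) := State {
  eta   : {ffun edge E -> R};
  omega : {ffun 'I_N -> R};
  pM    : {ffun 'I_N -> R};
  pc    : {ffun 'I_N -> R};
  psi   : {ffun edge Ec -> R}
}.
Arguments state R {N} E Ec.

Section Field.
Variables (R : realFieldType) (N : nat) (E Ec : {set 'I_N * 'I_N}).
(* Loads: a finite type Ld of on-off loads, loc l = the bus j with l in L_j;
   so Ld is L~ = {(l,j) : l in L_j}. *)
Variables (Ld : finType) (loc : Ld -> 'I_N) (dbar : Ld -> R).
Variables (M gam kap A tau pL : 'I_N -> R).
Variables (B : edge E -> R) (tauc : edge Ec -> R).

Definition load (sigma : Ld -> bool) (j : 'I_N) : R :=
  \sum_(l : Ld | loc l == j) dbar l * (sigma l)%:R.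

Definition vfield (sigma : Ld -> bool) (x : state R E Ec) : state R E Ec :=
  State
    [ffun e : edge E => omega x (val e).1 - omega x (val e).2]
    [ffun j : 'I_N => (M j)^-1 *
        (pM x j - pL j - A j * omega x j - load sigma j
         - \sum_(e : edge E | (val e).1 == j) B e * eta x e
         + \sum_(e : edge E | (val e).2 == j) B e * eta x e)]
    [ffun j : 'I_N => - (gam j)^-1 * (pM x j + kap j * omega x j - kap j * pc x j)]
    [ffun j : 'I_N => (tau j)^-1 *
        (- pM x j + pL j + load sigma j
         - \sum_(e : edge Ec | (val e).1 == j) psi x e
         + \sum_(e : edge Ec | (val e).2 == j) psi x e)]
    [ffun e : edge Ec => (tauc e)^-1 * (pc x (val e).1 - pc x (val e).2)].

Definition zero_state : state R E Ec :=
  State [ffun=> 0] [ffun=> 0] [ffun=> 0] [ffun=> 0] [ffun=> 0].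

Definition equilibrium (sigma : Ld -> bool) (x : state R E Ec) : Prop :=
  vfield sigma x = zero_state.
End Field.

(* At an equilibrium the eta- and psi-equations say that omega and p^c agree
   across every power and communication line, hence are constant on the
   (weakly connected) graphs.  In the omega- and p^c-equations the line and
   communication terms are divergences of edge flows, which sum to zero over
   the buses; adding the two equations and summing over all buses therefore
   leaves sum_j A_j omega_j = 0, which forces the common frequency to vanish.
   Conversely, with omega = 0, p^c = c and p^M = kappa c, where
   c = sum_j (p^L_j + load_j) / sum_j kappa_j balances the total power, the
   remaining equations only ask for edge flows with a prescribed divergence of
   total zero; on a weakly connected graph these are obtained by routing the
   excess of every bus to a fixed root along a path. *)

From Pilot Require Import Defs.
From HB Require Import structures.
From mathcomp Require Import all_boot all_order all_algebra.
From mathcomp Require Import lra.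
Set Implicit Arguments. Unset Strict Implicit. Unset Printing Implicit Defensive.
Import Order.TTheory GRing.Theory Num.Theory.
Local Open Scope ring_scope.

Lemma sumr_gt0 (R : numDomainType) (I : finType) (i0 : I) (F : I -> R) :
  (forall i, 0 < F i) -> 0 < \sum_i F i.
Proof.
move=> F_gt0; rewrite (bigD1 i0) //= ltr_wpDr ?F_gt0 //.
by apply: sumr_ge0 => i _; apply: ltW.
Qed.

Lemma connected_const (N : nat) (E : {set 'I_N * 'I_N}) (T : Type)
    (g : 'I_N -> T) :
  weakly_connected E -> (forall e : edge E, g (val e).1 = g (val e).2) ->
  forall i j, g i = g j.
Proof.
move=> E_conn g_edge i j; have /connectP [p] := E_conn i j.
elim: p i => [|a p IHp] i /=; first by move=> _ ->.
case/andP=> /orP [iaE | aiE] p_path j_last; rewrite -(IHp a p_path j_last).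
  exact: (g_edge (exist _ (i, a) iaE)).
exact: esym (g_edge (exist _ (a, i) aiE)).
Qed.

Section Divergence.
Variables (V : zmodType) (N : nat) (E : {set 'I_N * 'I_N}).
Implicit Types f g : edge E -> V.

Definition divergence f (j : 'I_N) : V :=
  \sum_(e : edge E | (val e).1 == j) f e - \sum_(e : edge E | (val e).2 == j) f e.

Lemma eq_divergence f g : f =1 g -> divergence f =1 divergence g.
Proof. by move=> fg j; rewrite /divergence !(eq_bigr _ (fun e _ => fg e)). Qed.

Lemma divergence0 j : divergence (fun=> 0) j = 0.
Proof. by rewrite /divergence !big1 ?subrr. Qed.

Lemma divergenceD f g j :
  divergence (fun e => f e + g e) j = divergence f j + divergence g j.
Proof. by rewrite /divergence !big_split /= opprD addrACA. Qed.

Lemma divergenceN f j : divergence (fun e => - f e) j = - divergence f j.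
Proof. by rewrite /divergence !sumrN opprD !opprK. Qed.

Lemma divergence_sum (I : finType) (F : I -> edge E -> V) j :
  divergence (fun e => \sum_i F i e) j = \sum_i divergence (F i) j.
Proof. by rewrite /divergence sumrB; congr (_ - _); apply: exchange_big. Qed.

Lemma divergence_edge (e0 : edge E) (v : V) j :
  divergence (fun e => v *+ (e == e0)) j
  = v *+ (j == (val e0).1) - v *+ (j == (val e0).2).
Proof.
have pick_e0 (P : pred (edge E)) :
    \sum_(e | P e) v *+ (e == e0) = v *+ P e0.
  rewrite big_mkcond (bigD1 e0) //= eqxx big1 ?addr0; first by case: (P e0).
  by move=> e /negbTE ->; case: (P e).
by rewrite /divergence !pick_e0 ![j == _]eq_sym.
Qed.

Lemma sum_divergence f : \sum_j divergence f j = 0.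
Proof.
have sum_heads (k : edge E -> 'I_N) :
    \sum_j \sum_(e | k e == j) f e = \sum_e f e.
  rewrite (exchange_big_dep predT) //=; apply: eq_bigr => e _.
  by rewrite (big_pred1 (k e)) // => j; rewrite eq_sym.
by rewrite /divergence sumrB !sum_heads subrr.
Qed.

Lemma exists_flow_between (v : V) (s t : 'I_N) :
  connect (fun a b => ((a, b) \in E) || ((b, a) \in E)) s t ->
  exists f, forall j, divergence f j = v *+ (j == s) - v *+ (j == t).
Proof.
case/connectP=> p; elim: p s => [|a p IHp] s /=.
  by move=> _ ->; exists (fun=> 0) => j; rewrite divergence0 subrr.
case/andP=> sa p_path t_last; have [f fP] := IHp a p_path t_last.
have [g gP] : exists g, forall j, divergence g j = v *+ (j == s) - v *+ (j == a).
  case/orP: sa => [saE | asE].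
    exists (fun e => v *+ (e == exist _ (s, a) saE)) => j.
    by rewrite divergence_edge.
  exists (fun e => - (v *+ (e == exist _ (a, s) asE))) => j.
  by rewrite divergenceN divergence_edge opprB.
exists (fun e => g e + f e) => j.
by rewrite divergenceD fP gP addrA subrK.
Qed.

Lemma exists_flow (b : 'I_N -> V) : weakly_connected E -> \sum_j b j = 0 ->
  exists f, forall j, divergence f j = b j.
Proof.
move=> E_conn b_sum0; have [t _ | no_node] := pickP 'I_N; last first.
  by exists (fun=> 0) => j; have := no_node j.
have /fin_all_exists [F FP] s := exists_flow_between (b s) (E_conn s t).
exists (fun e => \sum_s F s e) => j.
rewrite divergence_sum (eq_bigr _ (fun s _ => FP s j)) sumrB sumrMnl b_sum0.
rewrite mul0rn subr0 (bigD1 j) //= eqxx big1 ?addr0 // => s /negbTE.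
by rewrite eq_sym => ->.
Qed.

End Divergence.

Lemma ffun_scale_eq0 (R : idomainType) (I : finType) {c F : I -> R} :
  (forall i, c i != 0) -> [ffun i => c i * F i] = [ffun=> 0] <-> forall i, F i = 0.
Proof.
move=> c_neq0; split=> [/ffunP cF0 i | F0].
  move: (cF0 i); rewrite !ffunE => /eqP.
  by rewrite mulf_eq0 (negbTE (c_neq0 i)) => /eqP.
by apply/ffunP => i; rewrite !ffunE F0 mulr0.
Qed.

Section Equilibrium.
Variables (R : realFieldType) (N : nat) (E Ec : {set 'I_N * 'I_N}).
Variables (Ld : finType) (loc : Ld -> 'I_N) (dbar : Ld -> R).
Variables (M gam kap A tau pL : 'I_N -> R) (B : edge E -> R) (tauc : edge Ec -> R).
Hypotheses (M_neq0 : forall j, M j != 0) (gam_neq0 : forall j, gam j != 0).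
Hypotheses (tau_neq0 : forall j, tau j != 0) (tauc_neq0 : forall e, tauc e != 0).

Local Notation load := (load loc dbar).
Local Notation equilibrium := (equilibrium loc dbar M gam kap A tau pL B tauc).

Lemma equilibriumP sigma (x : state R E Ec) : equilibrium sigma x <->
  [/\ forall e : edge E, omega x (val e).1 = omega x (val e).2,
      forall j, pM x j - pL j - load sigma j - A j * omega x j
                = divergence (fun e => B e * Defs.eta x e) j,
      forall j, pM x j = kap j * (pc x j - omega x j),
      forall j, pM x j - pL j - load sigma j = - divergence (psi x) j &
      forall e : edge Ec, pc x (val e).1 = pc x (val e).2].
Proof.
have inv_neq0 (a : R) : a != 0 -> a^-1 != 0 by rewrite invr_eq0.
have oppinv_neq0 (a : R) : a != 0 -> - a^-1 != 0 by rewrite oppr_eq0 invr_eq0.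
rewrite /equilibrium /vfield /zero_state /divergence; split.
  case=> /ffunP eta_eq /(ffun_scale_eq0 (fun j => inv_neq0 _ (M_neq0 j))) omega_eq.
  move=> /(ffun_scale_eq0 (fun j => oppinv_neq0 _ (gam_neq0 j))) pM_eq.
  move=> /(ffun_scale_eq0 (fun j => inv_neq0 _ (tau_neq0 j))) pc_eq.
  move=> /(ffun_scale_eq0 (fun e => inv_neq0 _ (tauc_neq0 e))) psi_eq.
  split=> [e|j|j|j|e].
  - by apply/eqP; rewrite -subr_eq0; move: (eta_eq e); rewrite !ffunE => ->.
  - by move: (omega_eq j) ; lra.
  - by move: (pM_eq j) ; lra.
  - by move: (pc_eq j) ; lra.
  - by apply/eqP; rewrite -subr_eq0 -(psi_eq e).
case=> eta_eq omega_eq pM_eq pc_eq psi_eq; congr State.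
- by apply/ffunP => e; rewrite !ffunE eta_eq subrr.
- apply/(ffun_scale_eq0 (fun j => inv_neq0 _ (M_neq0 j))) => j.
  by move: (omega_eq j); lra.
- apply/(ffun_scale_eq0 (fun j => oppinv_neq0 _ (gam_neq0 j))) => j.
  by move: (pM_eq j); lra.
- apply/(ffun_scale_eq0 (fun j => inv_neq0 _ (tau_neq0 j))) => j.
  by move: (pc_eq j); lra.
- apply/(ffun_scale_eq0 (fun e => inv_neq0 _ (tauc_neq0 e))) => e.
  by rewrite psi_eq subrr.
Qed.

Lemma equilibrium_exists sigma :
  \sum_j kap j != 0 -> (forall e, B e != 0) ->
  weakly_connected E -> weakly_connected Ec ->
  exists x : state R E Ec, equilibrium sigma x.
Proof.
move=> kap_sum_neq0 B_neq0 E_conn Ec_conn.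
pose c := (\sum_j (pL j + load sigma j)) / \sum_j kap j.
pose imbalance j := kap j * c - pL j - load sigma j.
have imbalance_sum0 : \sum_j imbalance j = 0.
  by rewrite /imbalance !sumrB -mulr_suml mulrC divfK // big_split /=; lra.
have [f fP] := exists_flow E_conn imbalance_sum0.
have [g gP] : exists g : edge Ec -> R, forall j, divergence g j = - imbalance j.
  by apply: exists_flow; rewrite // sumrN imbalance_sum0 oppr0.
exists (State [ffun e => f e / B e] [ffun=> 0] [ffun j => kap j * c] [ffun=> c]
               [ffun e => g e]).
apply/equilibriumP; split=> [e|j|j|j|e] /=; rewrite ?ffunE ?subr0 //.
- rewrite mulr0 subr0 -/(imbalance j) -fP; apply: eq_divergence => e.
  by rewrite ffunE mulrC divfK.
- rewrite -/(imbalance j) -[imbalance j]opprK -gP; congr (- _).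
  by apply: eq_divergence => e; rewrite ffunE.
Qed.

Lemma equilibrium_omega0 sigma (x : state R E Ec) :
  (forall j, 0 < A j) -> weakly_connected E -> equilibrium sigma x ->
  forall j, omega x j = 0.
Proof.
move=> A_gt0 E_conn /equilibriumP [omega_edge omega_eq _ pc_eq _] j.
have damping_sum0 : \sum_i A i * omega x i = 0.
  have damping i : A i * omega x i
      = - (divergence (fun e => B e * Defs.eta x e) i + divergence (psi x) i).
    by rewrite -omega_eq pc_eq; lra.
  rewrite (eq_bigr _ (fun i _ => damping i)) sumrN big_split /=.
  by rewrite !sum_divergence addr0 oppr0.
have omega_const := connected_const E_conn omega_edge.
have : (\sum_i A i) * omega x j = 0.
  rewrite mulr_suml -[RHS]damping_sum0; apply: eq_bigr => i _.
  by rewrite (omega_const i j).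
by move/eqP; rewrite mulf_eq0 gt_eqF ?(sumr_gt0 j) // => /eqP.
Qed.

Lemma equilibrium_pc_const sigma (x : state R E Ec) :
  weakly_connected Ec -> equilibrium sigma x -> forall i j, pc x i = pc x j.
Proof. by move=> Ec_conn /equilibriumP [_ _ _ _ /(connected_const Ec_conn)]. Qed.

End Equilibrium.

Theorem lemma3 (R : realFieldType) (N : nat) (E Ec : {set 'I_N * 'I_N})
  (Ld : finType) (loc : Ld -> 'I_N) (dbar : Ld -> R)
  (M gam kap A tau pL : 'I_N -> R) (B : edge E -> R) (tauc : edge Ec -> R) :
  (0 < N)%N ->
  oriented E -> weakly_connected E -> weakly_connected Ec ->
  (forall l, 0 < dbar l) ->
  (forall j, 0 < M j) -> (forall j, 0 < gam j) -> (forall j, 0 < kap j) ->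
  (forall j, 0 < A j) -> (forall j, 0 < tau j) ->
  (forall e, 0 < B e) -> (forall e, 0 < tauc e) ->
  (forall sigma : Ld -> bool, exists x : state R E Ec,
     equilibrium loc dbar M gam kap A tau pL B tauc sigma x) /\
  (forall (sigma : Ld -> bool) (x : state R E Ec),
     equilibrium loc dbar M gam kap A tau pL B tauc sigma x ->
     (forall j, omega x j = 0) /\ (exists c : R, forall j, pc x j = c)).
Proof.
move=> N_gt0 _ E_conn Ec_conn _ M_gt0 gam_gt0 kap_gt0 A_gt0 tau_gt0 B_gt0 tauc_gt0.
have neq0 (I : Type) (a : I -> R) : (forall i, 0 < a i) -> forall i, a i != 0.
  by move=> a_gt0 i; apply: lt0r_neq0.
have M_neq0 := neq0 _ _ M_gt0; have gam_neq0 := neq0 _ _ gam_gt0.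
have tau_neq0 := neq0 _ _ tau_gt0; have tauc_neq0 := neq0 _ _ tauc_gt0.
pose i0 := Ordinal N_gt0.
split=> [sigma | sigma x x_eq].
  apply: equilibrium_exists => //; last exact: neq0.
  exact/lt0r_neq0/(sumr_gt0 i0).
split; first exact: equilibrium_omega0 x_eq.
by exists (pc x i0) => j; apply: equilibrium_pc_const x_eq j i0.
Qed.
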